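(* Let $\mathcal Q$ be a quantaloid and $\Phi:\mathcal E\to\mathcal D$ a $\mathcal Q$-distributor. A $\mathcal Q$-category $\mathcal C$ is equivalent to the Isbell $\mathcal Q$-category $\mathsf I\Phi$ if and only if $\mathcal C$ is total and there are $\mathcal Q$-functors $F:\mathcal E\to\mathcal C$ and $G:\mathcal D\to\mathcal C$ such that (1) $\Phi(X,Y)=\mathcal C(FX,GY)$ for all $X\in\mathrm{ob}\,\mathcal E$, $Y\in\mathrm{ob}\,\mathcal D$; (2) $F$ is dense; (3) $G$ is codense.
   Context: A quantaloid is a category whose hom-sets are complete lattices with composition preserving joins in each variable; $v\le w\swarrow u\iff v\circ u\le w$ and $u\le v\searrow w\iff v\circ u\le w$. A $\mathcal Q$-category: objects with extents $|X|$ and arrows $\mathcal E(X,Y):|X|\to|Y|$ with $1_{|X|}\le\mathcal E(X,X)$, $\mathcal E(Y,Z)\circ\mathcal E(X,Y)\le\mathcal E(X,Z)$; $\mathcal Q$-functors: $|FX|=|X|$, $\mathcal E(X,Y)\le\mathcal C(FX,FY)$. $X\cong Y$ iff $|X|=|Y|$, $1\le\mathcal C(X,Y)$, $1\le\mathcal C(Y,X)$; an equivalence is a $\mathcal Q$-functor that is fully faithful and surjective up to isomorphism. Presheaves of extent $T$: $\varphi_X:|X|\to T$ with $\varphi_X\circ\mathcal E(X',X)\le\varphi_{X'}$, forming $\mathsf P\mathcal E$ with $\mathsf P\mathcal E(\varphi,\psi)=\bigwedge_X\psi_X\swarrow\varphi_X$; covariant presheaves of extent $T$: $\psi_Y:T\to|Y|$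 with $\mathcal D(Y,Y')\circ\psi_Y\le\psi_{Y'}$, forming $\mathsf P^\dagger\mathcal D$ with $\mathsf P^\dagger\mathcal D(\psi,\psi')=\bigwedge_Y\psi'_Y\searrow\psi_Y$. $\mathcal C$ is total if the Yoneda functor $Z\mapsto\mathcal C(-,Z)$ has a left adjoint ($F\dashv G$ iff $\mathcal C(FX,Y)=\mathcal E(X,GY)$). For $\varphi\in\mathsf P\mathcal E$, the weighted colimit $\varphi\star F$ is an object $Z$ with $|Z|=|\varphi|$ and $\mathcal C(Z,W)=\bigwedge_X\mathcal C(FX,W)\swarrow\varphi_X$ for all $W$; $F$ is dense if every object of $\mathcal C$ is isomorphic to $\varphi\star F$ for some $\varphi$. For a covariant presheaf $\psi$ on $\mathcal D$ of extent $T$, the weighted limit of $G$ by $\psi$ is $Z$ with $|Z|=T$ and $\mathcal C(W,Z)=\bigwedge_Y\psi_Y\searrow\mathcal C(W,GY)$ for all $W$; $G$ is codense if every object of $\mathcal C$ is isomorphic to such a weighted limit. A $\mathcal Q$-distributor $\Phi:\mathcal E\to\mathcal D$ is a family $\Phi(X,Y):|X|\to|Y|$ with $\mathcal D(Y,Y')\circ\Phi(X,Y)\circ\mathcal E(X',X)\le\Phi(X',Y')$; $\Phi_\uparrow:\mathsf P\mathcal E\to\mathsf P^\dagger\mathcal D$, $(\Phi_\uparrow\varphi)_Y=\bigwedge_X\Phi(X,Y)\swarrow\varphi_X$; $\Phi^\downarrow:\mathsf P^\dagger\mathcal D\to\mathsf P\mathcal E$, $(\Phi^\downarrow\psi)_X=\bigwedge_Y\psi_Y\searrow\Phi(X,Y)$;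 $\mathsf I\Phi$ is the full $\mathcal Q$-subcategory of $\mathsf P\mathcal E$ on those $\varphi$ with $\Phi^\downarrow\Phi_\uparrow\varphi=\varphi$. *)

From Stdlib Require Import ssreflect.

Set Implicit Arguments.
Unset Strict Implicit.

Record Quantaloid := {
  qob : Type;
  qhom : qob -> qob -> Type;
  qcomp : forall a b c, qhom b c -> qhom a b -> qhom a c;
  qid : forall a, qhom a a;
  qle : forall a b, qhom a b -> qhom a b -> Prop;
  qsup : forall a b, (qhom a b -> Prop) -> qhom a b;
  qcomp_assoc : forall a b c d (h : qhom c d) (g : qhom b c) (f : qhom a b),
      qcomp h (qcomp g f) = qcomp (qcomp h g) f;
  qcomp_id_l : forall a b (f : qhom a b), qcomp (qid b) f = f;
  qcomp_id_r : forall a b (f : qhom a b), qcomp f (qid a) = f;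
  qle_refl : forall a b (f : qhom a b), qle f f;
  qle_trans : forall a b (f g h : qhom a b), qle f g -> qle g h -> qle f h;
  qle_antisym : forall a b (f g : qhom a b), qle f g -> qle g f -> f = g;
  qsup_ub : forall a b (S : qhom a b -> Prop) f, S f -> qle f (qsup S);
  qsup_least : forall a b (S : qhom a b -> Prop) g,
      (forall f, S f -> qle f g) -> qle (qsup S) g;
  qcomp_sup_l : forall a b c (g : qhom b c) (S : qhom a b -> Prop),
      qcomp g (qsup S) = qsup (fun h => exists f, S f /\ h = qcomp g f);
  qcomp_sup_r : forall a b c (S : qhom b c -> Prop) (f : qhom a b),
      qcomp (qsup S) f = qsup (fun h => exists g, S g /\ h = qcomp g f)
}.

Arguments qhom : clear implicits.
Arguments qcomp {q a b c} _ _.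
Arguments qid {q} a.
Arguments qle {q a b} _ _.
Arguments qsup {q a b} _.
Unset Implicit Arguments.

Section QuantaloidOps.
Context {Q : Quantaloid}.

Definition qinf {a b} (S : qhom Q a b -> Prop) : qhom Q a b :=
  qsup (fun x => forall y, S y -> qle x y).
Definition qinfI {I : Type} {a b} (f : I -> qhom Q a b) : qhom Q a b :=
  qinf (fun h => exists i, h = f i).

(* w ↙ u  (for u : a -> b, w : a -> c): the largest v : b -> c with v∘u ≤ w *)
Definition lres {a b c} (w : qhom Q a c) (u : qhom Q a b) : qhom Q b c :=
  qsup (fun v => qle (qcomp v u) w).
(* v ↘ w  (for v : b -> c, w : a -> c): the largest u : a -> b with v∘u ≤ w *)
Definition rres {a b c} (v : qhom Q b c) (w : qhom Q a c) : qhom Q a b :=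
  qsup (fun u => qle (qcomp v u) w).

Definition castH {a a' b b'} (p : a = a') (q : b = b') (f : qhom Q a b)
  : qhom Q a' b' :=
  match p in _ = a1 return qhom Q a1 b' with
  | eq_refl => match q in _ = b1 return qhom Q a b1 with eq_refl => f end
  end.

Lemma comp_mono_l {a b c} (g : qhom Q b c) {f f' : qhom Q a b} :
  qle f f' -> qle (qcomp g f) (qcomp g f').
Proof.
move=> H.
have -> : f' = qsup (fun h => h = f \/ h = f').
  apply: qle_antisym; first by apply: qsup_ub; right.
  by apply: qsup_least => h [->|->] //; apply: qle_refl.
rewrite qcomp_sup_l; apply: qsup_ub; exists f; split=> //; by left.
Qed.

Lemma comp_mono_r {a b c} {g g' : qhom Q b c} (f : qhom Q a b) :
  qle g g' -> qle (qcomp g f) (qcomp g' f).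
Proof.
move=> H.
have -> : g' = qsup (fun h => h = g \/ h = g').
  apply: qle_antisym; first by apply: qsup_ub; right.
  by apply: qsup_least => h [->|->] //; apply: qle_refl.
rewrite qcomp_sup_r; apply: qsup_ub; exists g; split=> //; by left.
Qed.

Lemma lres_spec {a b c} (w : qhom Q a c) (u : qhom Q a b) v :
  qle v (lres w u) <-> qle (qcomp v u) w.
Proof.
split=> H.
- apply: qle_trans (comp_mono_r u H) _.
  rewrite /lres qcomp_sup_r; apply: qsup_least => h [g [Hg ->]] //.
- by apply: qsup_ub.
Qed.

Lemma qinfI_spec {I : Type} {a b} (f : I -> qhom Q a b) x :
  qle x (qinfI f) <-> forall i, qle x (f i).
Proof.
split=> H.
- move=> i; apply: qle_trans H _; apply: qsup_least => y Hy; apply: Hy.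
  by exists i.
- apply: qsup_ub => y [i ->]; exact: H.
Qed.

End QuantaloidOps.

Record QCat (Q : Quantaloid) := {
  cobj : Type;
  cext : cobj -> qob Q;
  chom : forall X Y : cobj, qhom Q (cext X) (cext Y);
  chom_id : forall X, qle (qid (cext X)) (chom X X);
  chom_comp : forall X Y Z, qle (qcomp (chom Y Z) (chom X Y)) (chom X Z)
}.
Arguments cobj {Q} q : rename.
Arguments cext {Q} q _ : rename.
Arguments chom {Q} q _ _ : rename.

Record QFun {Q} (A B : QCat Q) := {
  fobj : cobj A -> cobj B;
  fext : forall X, cext B (fobj X) = cext A X;
  fhom : forall X Y,
      qle (chom A X Y) (castH (fext X) (fext Y) (chom B (fobj X) (fobj Y)))
}.
Arguments fobj {Q A B} _ _.
Arguments fext {Q A B} _ _.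

Section QCatNotions.
Context {Q : Quantaloid}.

Definition qiso (C : QCat Q) (X Y : cobj C) : Prop :=
  exists p : cext C X = cext C Y,
    qle (castH eq_refl p (qid (cext C X))) (chom C X Y) /\
    qle (castH p eq_refl (qid (cext C X))) (chom C Y X).

Definition fully_faithful {A B : QCat Q} (F : QFun A B) : Prop :=
  forall X Y, castH (fext F X) (fext F Y) (chom B (fobj F X) (fobj F Y))
              = chom A X Y.

Definition ess_surjective {A B : QCat Q} (F : QFun A B) : Prop :=
  forall Z : cobj B, exists X, qiso B (fobj F X) Z.

Definition qequivalence {A B : QCat Q} (F : QFun A B) : Prop :=
  fully_faithful F /\ ess_surjective F.

Definition qadjoint {A B : QCat Q} (F : QFun A B) (G : QFun B A) : Prop :=
  forall X Y, castH (fext F X) eq_refl (chom B (fobj F X) Y)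
              = castH eq_refl (fext G Y) (chom A X (fobj G Y)).

Definition FullSub (C : QCat Q) (P : cobj C -> Prop) : QCat Q.
Proof.
refine {| cobj := {X : cobj C | P X};
          cext := fun X => cext C (proj1_sig X);
          chom := fun X Y => chom C (proj1_sig X) (proj1_sig Y) |}.
- move=> X; exact: chom_id.
- move=> X Y Z; exact: chom_comp.
Defined.

Definition is_presheaf (E : QCat Q) {T : qob Q}
  (phi : forall X : cobj E, qhom Q (cext E X) T) : Prop :=
  forall X X', qle (qcomp (phi X) (chom E X' X)) (phi X').

Definition PObj (E : QCat Q) : Type :=
  {T : qob Q & {phi : forall X : cobj E, qhom Q (cext E X) T | is_presheaf E phi}}.
Definition pext {E : QCat Q} (p : PObj E) : qob Q := projT1 p.
Definition pval {E : QCat Q} (p : PObj E) : forall X, qhom Q (cext E X) (pext p) :=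
  proj1_sig (projT2 p).

Definition phom {E : QCat Q} (p q : PObj E) : qhom Q (pext p) (pext q) :=
  qinfI (fun X => lres (pval q X) (pval p X)).

Definition PCat (E : QCat Q) : QCat Q.
Proof.
refine {| cobj := PObj E; cext := @pext E; chom := @phom E |}.
- move=> p; apply/qinfI_spec => X; apply/lres_spec.
  rewrite qcomp_id_l; exact: qle_refl.
- move=> p q r; apply/qinfI_spec => X; apply/lres_spec.
  rewrite -qcomp_assoc.
  have H1 : qle (qcomp (phom p q) (pval p X)) (pval q X).
    apply/lres_spec; move: (qle_refl (phom p q)) => /qinfI_spec; exact.
  have H2 : qle (qcomp (phom q r) (pval q X)) (pval r X).
    apply/lres_spec; move: (qle_refl (phom q r)) => /qinfI_spec; exact.
  exact: qle_trans (comp_mono_l _ H1) H2.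
Defined.

Definition is_copresheaf (D : QCat Q) {T : qob Q}
  (psi : forall Y : cobj D, qhom Q T (cext D Y)) : Prop :=
  forall Y Y', qle (qcomp (chom D Y Y') (psi Y)) (psi Y').

Definition CPObj (D : QCat Q) : Type :=
  {T : qob Q & {psi : forall Y : cobj D, qhom Q T (cext D Y) | is_copresheaf D psi}}.
Definition cpext {D : QCat Q} (p : CPObj D) : qob Q := projT1 p.
Definition cpval {D : QCat Q} (p : CPObj D) : forall Y, qhom Q (cpext p) (cext D Y) :=
  proj1_sig (projT2 p).

Definition yon_obj (C : QCat Q) (Z : cobj C) : PObj C.
Proof.
refine (existT _ (cext C Z) (exist _ (fun X => chom C X Z) _)).
move=> X X'; exact: chom_comp.
Defined.

Definition Yoneda (C : QCat Q) : QFun C (PCat C).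
Proof.
refine (@Build_QFun Q C (PCat C) (yon_obj C) (fun Z => eq_refl) _).
move=> Y Z; simpl; apply/qinfI_spec => X; apply/lres_spec; exact: chom_comp.
Defined.

Definition total (C : QCat Q) : Prop :=
  exists L : QFun (PCat C) C, qadjoint L (Yoneda C).

Definition is_wcolim {E C : QCat Q} (F : QFun E C) (phi : PObj E) (Z : cobj C)
  : Prop :=
  exists p : cext C Z = pext phi,
    forall W : cobj C,
      castH p eq_refl (chom C Z W)
      = qinfI (fun X => lres (castH (fext F X) eq_refl (chom C (fobj F X) W))
                             (pval phi X)).

Definition dense {E C : QCat Q} (F : QFun E C) : Prop :=
  forall Z : cobj C, exists (phi : PObj E) (Z' : cobj C),
    is_wcolim F phi Z' /\ qiso C Z Z'.

Definition is_wlim {D C : QCat Q} (G : QFun D C) (psi : CPObj D) (Z : cobj C)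
  : Prop :=
  exists p : cext C Z = cpext psi,
    forall W : cobj C,
      castH eq_refl p (chom C W Z)
      = qinfI (fun Y => rres (cpval psi Y)
                             (castH eq_refl (fext G Y) (chom C W (fobj G Y)))).

Definition codense {D C : QCat Q} (G : QFun D C) : Prop :=
  forall Z : cobj C, exists (psi : CPObj D) (Z' : cobj C),
    is_wlim G psi Z' /\ qiso C Z Z'.

Record QDist (E D : QCat Q) := {
  dmap : forall (X : cobj E) (Y : cobj D), qhom Q (cext E X) (cext D Y);
  dmap_ax : forall X X' Y Y',
      qle (qcomp (chom D Y Y') (qcomp (dmap X Y) (chom E X' X))) (dmap X' Y')
}.
Arguments dmap {E D} _ _ _.

Definition dist_up {E D : QCat Q} (Phi : QDist E D) {T : qob Q}
  (phi : forall X : cobj E, qhom Q (cext E X) T) : forall Y : cobj D, qhom Q T (cext D Y) :=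
  fun Y => qinfI (fun X => lres (dmap Phi X Y) (phi X)).

Definition dist_down {E D : QCat Q} (Phi : QDist E D) {T : qob Q}
  (psi : forall Y : cobj D, qhom Q T (cext D Y)) : forall X : cobj E, qhom Q (cext E X) T :=
  fun X => qinfI (fun Y => rres (psi Y) (dmap Phi X Y)).

Definition Isbell {E D : QCat Q} (Phi : QDist E D) : QCat Q :=
  FullSub (PCat E)
    (fun p => forall X, dist_down Phi (dist_up Phi (pval p)) X = pval p X).

End QCatNotions.
Arguments dmap {Q E D} _ _ _.

(* Sufficiency: density and codensity express every hom of C through F and G,
   C(Z,W) = ⋀_X C(FX,W) ↙ C(FX,Z) = ⋀_Y C(Z,GY) ↘ C(W,GY).  With Φ = C(F-,G-)
   this gives Φ↑C(F-,Z) = C(Z,G-) and Φ↓C(Z,G-) = C(F-,Z), so Z ↦ C(F-,Z) is a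
   fully faithful functor into IΦ; a closed φ is hit by the colimit, which exists
   by totality, of the weight W ↦ ⋀_Y (Φ↑φ)_Y ↘ C(W,GY).
   Necessity: transport along the equivalence.  F and G are preimages of the
   closures of the representables and of the columns Φ(-,Y), and the colimit of a
   presheaf ps on C is the preimage of the closure of X ↦ ⋁_W ps_W ∘ (HW)_X. *)

From Stdlib Require Import ssreflect ProofIrrelevance FunctionalExtensionality IndefiniteDescription.

Section Transport.
Context {Q : Quantaloid}.

Lemma castH_irr {a a' b b' : qob Q} (p p' : a = a') (q q' : b = b') (f : qhom Q a b) :
  castH p q f = castH p' q' f.
Proof. by rewrite (proof_irrelevance _ p p') (proof_irrelevance _ q q'). Qed.

Lemma castH_refl {a b : qob Q} (p : a = a) (q : b = b) f : castH p q f = f.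
Proof. by rewrite (castH_irr p eq_refl q eq_refl). Qed.

Lemma castH_trans {a a' a'' b b' b'' : qob Q} (p : a = a') (q : b = b')
    (p' : a' = a'') (q' : b' = b'') (pp : a = a'') (qq : b = b'') f :
  castH p' q' (castH p q f) = castH pp qq f.
Proof. by destruct p', q', p, q; rewrite (castH_refl pp qq). Qed.

Lemma castH_split {a a' b b' : qob Q} (p : a = a') (q : b = b') f :
  castH p q f = castH eq_refl q (castH p eq_refl f).
Proof. by destruct p, q. Qed.

Lemma castH_comm {a a' b b' : qob Q} (p : a = a') (q : b = b') f :
  castH p eq_refl (castH eq_refl q f) = castH eq_refl q (castH p eq_refl f).
Proof. by destruct p, q. Qed.

Lemma castH_sym {a a' b b' : qob Q} (p : a = a') (q : b = b') f :
  castH (eq_sym p) (eq_sym q) (castH p q f) = f.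
Proof. by destruct p, q. Qed.

Lemma castH_comp {a a' b b' c c' : qob Q} (p : a = a') (q : b = b') (r : c = c')
    (g : qhom Q b c) (f : qhom Q a b) :
  castH p r (qcomp g f) = qcomp (castH q r g) (castH p q f).
Proof. by destruct p, q, r. Qed.

Lemma castH_comp_l {a a' b c : qob Q} (p : a = a') (g : qhom Q b c) (f : qhom Q a b) :
  castH p eq_refl (qcomp g f) = qcomp g (castH p eq_refl f).
Proof. by destruct p. Qed.

Lemma castH_comp_r {a b c c' : qob Q} (r : c = c') (g : qhom Q b c) (f : qhom Q a b) :
  castH eq_refl r (qcomp g f) = qcomp (castH eq_refl r g) f.
Proof. by destruct r. Qed.

Lemma castH_le {a a' b b' : qob Q} (p : a = a') (q : b = b') f g :
  qle f g -> qle (castH p q f) (castH p q g).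
Proof. by destruct p, q. Qed.

Lemma castH_id {a a' : qob Q} (p p' : a = a') : castH p p' (qid a) = qid a'.
Proof. by destruct p; rewrite castH_refl. Qed.

Lemma castH_lres {a a' b b' c c' : qob Q} (p : a = a') (q : b = b') (r : c = c')
    (w : qhom Q a c) (u : qhom Q a b) :
  castH q r (lres w u) = lres (castH p r w) (castH p q u).
Proof. by destruct p, q, r. Qed.

Lemma castH_rres {a a' b b' c c' : qob Q} (p : a = a') (q : b = b') (r : c = c')
    (v : qhom Q b c) (w : qhom Q a c) :
  castH p q (rres v w) = rres (castH q r v) (castH p r w).
Proof. by destruct p, q, r. Qed.

Lemma castH_qinfI {I : Type} {a a' b b' : qob Q} (p : a = a') (q : b = b')
    (f : I -> qhom Q a b) :
  castH p q (qinfI f) = qinfI (fun i => castH p q (f i)).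
Proof. by destruct p, q. Qed.

Lemma comp_castH_id_r {a a' c : qob Q} (p : a = a') (g : qhom Q a' c) :
  qcomp g (castH eq_refl p (qid a)) = castH (eq_sym p) eq_refl g.
Proof. by destruct p; rewrite qcomp_id_r. Qed.

Lemma comp_castH_id_r' {a a' c : qob Q} (p : a = a') (g : qhom Q a c) :
  qcomp g (castH p eq_refl (qid a)) = castH p eq_refl g.
Proof. by destruct p; rewrite qcomp_id_r. Qed.

Lemma comp_castH_id_l {a a' c : qob Q} (p : a = a') (g : qhom Q c a) :
  qcomp (castH eq_refl p (qid a)) g = castH eq_refl p g.
Proof. by destruct p; rewrite qcomp_id_l. Qed.

Lemma comp_castH_id_l' {a a' c : qob Q} (p : a = a') (g : qhom Q c a') :
  qcomp (castH p eq_refl (qid a)) g = castH eq_refl (eq_sym p) g.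
Proof. by destruct p; rewrite qcomp_id_l. Qed.

End Transport.

Section Residuation.
Context {Q : Quantaloid}.

Lemma eq_of_lower_bounds {a b : qob Q} (x y : qhom Q a b) :
  (forall z, qle z x <-> qle z y) -> x = y.
Proof. by move=> H; apply: qle_antisym; [apply/H | apply/(H y)]; apply: qle_refl. Qed.

Lemma rres_spec {a b c : qob Q} (v : qhom Q b c) (w : qhom Q a c) u :
  qle u (rres v w) <-> qle (qcomp v u) w.
Proof.
split=> H; last by apply: qsup_ub.
apply: qle_trans (comp_mono_l v H) _.
by rewrite /rres qcomp_sup_l; apply: qsup_least => h [g [Hg ->]].
Qed.

Lemma qinfI_lb {I : Type} {a b : qob Q} (f : I -> qhom Q a b) i : qle (qinfI f) (f i).
Proof. by move: (qle_refl (qinfI f)) => /qinfI_spec. Qed.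

Lemma qinfI_mono {I : Type} {a b : qob Q} (f g : I -> qhom Q a b) :
  (forall i, qle (f i) (g i)) -> qle (qinfI f) (qinfI g).
Proof. by move=> H; apply/qinfI_spec => i; apply: qle_trans (qinfI_lb f i) (H i). Qed.

Lemma qinfI_ext {I : Type} {a b : qob Q} (f g : I -> qhom Q a b) :
  (forall i, f i = g i) -> qinfI f = qinfI g.
Proof. by move=> H; rewrite (functional_extensionality f g H). Qed.

Lemma lres_comp {a b c : qob Q} (w : qhom Q a c) (u : qhom Q a b) :
  qle (qcomp (lres w u) u) w.
Proof. by apply/lres_spec; apply: qle_refl. Qed.

Lemma rres_comp {a b c : qob Q} (v : qhom Q b c) (w : qhom Q a c) :
  qle (qcomp v (rres v w)) w.
Proof. by apply/rres_spec; apply: qle_refl. Qed.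

Lemma lres_anti {a b c : qob Q} (w : qhom Q a c) (u u' : qhom Q a b) :
  qle u u' -> qle (lres w u') (lres w u).
Proof. by move=> H; apply/lres_spec; apply: qle_trans (comp_mono_l _ H) (lres_comp _ _). Qed.

Lemma rres_anti {a b c : qob Q} (v v' : qhom Q b c) (w : qhom Q a c) :
  qle v v' -> qle (rres v' w) (rres v w).
Proof. by move=> H; apply/rres_spec; apply: qle_trans (comp_mono_r _ H) (rres_comp _ _). Qed.

End Residuation.

Section Isomorphisms.
Context {Q : Quantaloid} {K : QCat Q}.

Lemma qiso_refl (A : cobj K) : qiso K A A.
Proof. by exists eq_refl; split; apply: chom_id. Qed.

Lemma qiso_hom (A B : cobj K) (q : cext K A = cext K B) : qiso K A B ->
  (forall W, chom K A W = castH (eq_sym q) eq_refl (chom K B W)) /\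
  (forall W, chom K W A = castH eq_refl (eq_sym q) (chom K W B)).
Proof.
case=> p [hAB hBA]; rewrite (proof_irrelevance _ q p); clear q.
split=> W; apply: qle_antisym.
- rewrite -(castH_sym p eq_refl (chom K A W)); apply: castH_le.
  apply: qle_trans (chom_comp _ _ _ _ _).
  by rewrite -comp_castH_id_r'; apply: comp_mono_l.
- apply: qle_trans (chom_comp _ _ _ _ _).
  by rewrite -comp_castH_id_r; apply: comp_mono_l.
- rewrite -(castH_sym eq_refl p (chom K W A)); apply: castH_le.
  apply: qle_trans (chom_comp _ _ _ _ _).
  by rewrite -comp_castH_id_l; apply: comp_mono_r.
- apply: qle_trans (chom_comp _ _ _ _ _).
  by rewrite -comp_castH_id_l'; apply: comp_mono_r.
Qed.

End Isomorphisms.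

Section Presheaves.
Context {Q : Quantaloid} {E : QCat Q}.

Lemma phom_pval (p q : PObj E) X : qle (qcomp (phom p q) (pval p X)) (pval q X).
Proof. by apply/lres_spec; apply: (qinfI_lb (fun X => lres (pval q X) (pval p X))). Qed.

Lemma phom_yoneda X (r : PObj E) : phom (yon_obj E X) r = pval r X.
Proof.
apply: qle_antisym.
- apply: qle_trans (phom_pval (yon_obj E X) r X).
  by rewrite -{1}(qcomp_id_r (phom _ _)); apply: comp_mono_l; apply: chom_id.
- by apply/qinfI_spec => X'; apply/lres_spec; apply: (proj2_sig (projT2 r)).
Qed.

End Presheaves.

Section IsbellClosure.
Context {Q : Quantaloid} {E D : QCat Q} (Phi : QDist E D).

Definition dist_closed {T : qob Q} (phi : forall X : cobj E, qhom Q (cext E X) T) :=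
  forall X, dist_down Phi (dist_up Phi phi) X = phi X.

Lemma dmap_pre X X' Y : qle (qcomp (dmap Phi X Y) (chom E X' X)) (dmap Phi X' Y).
Proof.
apply: qle_trans (dmap_ax _ _ Phi X X' Y Y).
by rewrite -{1}(qcomp_id_l (qcomp _ _)); apply: comp_mono_r; apply: chom_id.
Qed.

Lemma dmap_post X Y Y' : qle (qcomp (chom D Y Y') (dmap Phi X Y)) (dmap Phi X Y').
Proof.
apply: qle_trans (dmap_ax _ _ Phi X X Y Y').
apply: comp_mono_l; rewrite -{1}(qcomp_id_r (dmap Phi X Y)).
by apply: comp_mono_l; apply: chom_id.
Qed.

Lemma dist_down_presheaf {T : qob Q} (psi : forall Y : cobj D, qhom Q T (cext D Y)) :
  is_presheaf E (dist_down Phi psi).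
Proof.
move=> X X'; apply/qinfI_spec => Y; apply/rres_spec; rewrite qcomp_assoc.
apply: qle_trans (comp_mono_r _ _) (dmap_pre X X' Y).
by apply/rres_spec; apply: (qinfI_lb (fun Y => rres (psi Y) (dmap Phi X Y))).
Qed.

Lemma dist_up_copresheaf {T : qob Q} (phi : forall X : cobj E, qhom Q (cext E X) T) :
  is_copresheaf D (dist_up Phi phi).
Proof.
move=> Y Y'; apply/qinfI_spec => X; apply/lres_spec; rewrite -qcomp_assoc.
apply: qle_trans (comp_mono_l _ _) (dmap_post X Y Y').
by apply/lres_spec; apply: (qinfI_lb (fun X => lres (dmap Phi X Y) (phi X))).
Qed.

Lemma le_dist_down_up {T : qob Q} (phi : forall X : cobj E, qhom Q (cext E X) T) X :
  qle (phi X) (dist_down Phi (dist_up Phi phi) X).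
Proof.
apply/qinfI_spec => Y; apply/rres_spec; apply/lres_spec.
exact: (qinfI_lb (fun X => lres (dmap Phi X Y) (phi X))).
Qed.

Lemma le_dist_up_down {T : qob Q} (psi : forall Y : cobj D, qhom Q T (cext D Y)) Y :
  qle (psi Y) (dist_up Phi (dist_down Phi psi) Y).
Proof.
apply/qinfI_spec => X; apply/lres_spec; apply/rres_spec.
exact: (qinfI_lb (fun Y => rres (psi Y) (dmap Phi X Y))).
Qed.

Lemma dist_down_up_closed {T : qob Q} (phi : forall X : cobj E, qhom Q (cext E X) T) :
  dist_closed (dist_down Phi (dist_up Phi phi)).
Proof.
move=> X; apply: qinfI_ext => Y; congr rres; apply: qle_antisym.
- by apply: qinfI_mono => X'; apply: lres_anti; apply: le_dist_down_up.
- exact: le_dist_up_down.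
Qed.

(* Both sides are the largest [z] with [u_Y ∘ z ∘ a_X ≤ Φ(X,Y)] for all [X], [Y]. *)
Lemma lres_dist_down_rres_dist_up {s t : qob Q} (a : forall X : cobj E, qhom Q (cext E X) s)
    (u : forall Y : cobj D, qhom Q t (cext D Y)) :
  qinfI (fun X => lres (dist_down Phi u X) (a X))
  = qinfI (fun Y => rres (u Y) (dist_up Phi a Y)).
Proof.
apply: eq_of_lower_bounds => z; split=> H.
- apply/qinfI_spec => Y; apply/rres_spec; apply/qinfI_spec => X; apply/lres_spec.
  move: H => /qinfI_spec/(_ X)/lres_spec/qinfI_spec/(_ Y)/rres_spec.
  by rewrite qcomp_assoc.
- apply/qinfI_spec => X; apply/lres_spec; apply/qinfI_spec => Y; apply/rres_spec.
  move: H => /qinfI_spec/(_ Y)/rres_spec/qinfI_spec/(_ X)/lres_spec.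
  by rewrite qcomp_assoc.
Qed.

Definition closureP (p : PObj E) : PObj E :=
  existT _ (pext p) (exist _ (dist_down Phi (dist_up Phi (pval p))) (dist_down_presheaf _)).

Lemma closureP_closed p : dist_closed (pval (closureP p)).
Proof. exact: dist_down_up_closed. Qed.

Definition closureI (p : PObj E) : cobj (Isbell Phi) := exist _ (closureP p) (closureP_closed p).

Lemma phom_closureP {p r : PObj E} : dist_closed (pval r) ->
  phom (closureP p) r = phom p r.
Proof.
move=> hr; apply: qle_antisym.
  by apply: qinfI_mono => X; apply: lres_anti; apply: le_dist_down_up.
apply/qinfI_spec => X; apply/lres_spec; rewrite -(hr X).
apply/qinfI_spec => Y; apply/rres_spec; rewrite qcomp_assoc.
have up_le : qle (qcomp (dist_up Phi (pval r) Y) (phom p r)) (dist_up Phi (pval p) Y).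
  apply/qinfI_spec => X'; apply/lres_spec; rewrite -qcomp_assoc.
  apply: qle_trans (comp_mono_l _ (phom_pval p r X')) _.
  by apply/lres_spec; apply: (qinfI_lb (fun X => lres (dmap Phi X Y) (pval r X))).
apply: qle_trans (comp_mono_r _ up_le) _.
by apply/rres_spec; apply: (qinfI_lb (fun Y => rres (dist_up Phi (pval p) Y) (dmap Phi X Y))).
Qed.

Lemma dmap_presheaf Y : is_presheaf E (fun X => dmap Phi X Y).
Proof. by move=> X X'; apply: dmap_pre. Qed.

Definition dmapP Y : PObj E :=
  existT _ (cext D Y) (exist _ (fun X => dmap Phi X Y) (dmap_presheaf Y)).

Lemma dmapP_closed Y : dist_closed (pval (dmapP Y)).
Proof.
move=> X; apply: qle_antisym; last exact: le_dist_down_up.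
apply: qle_trans (qinfI_lb _ Y) _.
apply: qle_trans (rres_anti (qid _) _ _ _) _.
- by apply/qinfI_spec => X'; apply/lres_spec; rewrite qcomp_id_l; apply: qle_refl.
- by rewrite -[rres _ _]qcomp_id_l; apply: rres_comp.
Qed.

Definition dmapI Y : cobj (Isbell Phi) := exist _ (dmapP Y) (dmapP_closed Y).

End IsbellClosure.

Section Sufficiency.
Context {Q : Quantaloid} {E D : QCat Q} (Phi : QDist E D) {C : QCat Q}
  (F : QFun E C) (G : QFun D C).
Hypothesis F_G_dmap : forall (X : cobj E) (Y : cobj D),
  castH (fext F X) (fext G Y) (chom C (fobj F X) (fobj G Y)) = dmap Phi X Y.
Hypothesis F_dense : dense F.
Hypothesis G_codense : codense G.

Definition homF X W : qhom Q (cext E X) (cext C W) :=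
  castH (fext F X) eq_refl (chom C (fobj F X) W).
Definition homG W Y : qhom Q (cext C W) (cext D Y) :=
  castH eq_refl (fext G Y) (chom C W (fobj G Y)).

Lemma dmap_homF X Y : dmap Phi X Y = castH eq_refl (fext G Y) (homF X (fobj G Y)).
Proof. by rewrite -F_G_dmap /homF (castH_trans _ _ _ _ (fext F X) (fext G Y)). Qed.

Lemma dmap_homG X Y : dmap Phi X Y = castH (fext F X) eq_refl (homG (fobj F X) Y).
Proof. by rewrite -F_G_dmap /homG (castH_trans _ _ _ _ (fext F X) (fext G Y)). Qed.

Lemma homF_post X W W' : qle (qcomp (chom C W W') (homF X W)) (homF X W').
Proof. by rewrite /homF -castH_comp_l; apply: castH_le; apply: chom_comp. Qed.

Lemma homF_pre X X' W : qle (qcomp (homF X W) (chom E X' X)) (homF X' W).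
Proof.
apply: qle_trans (comp_mono_l _ (fhom _ _ F X' X)) _.
rewrite /homF -(castH_comp (fext F X') (fext F X) eq_refl).
by apply: castH_le; apply: chom_comp.
Qed.

Lemma homG_pre W W' Y : qle (qcomp (homG W Y) (chom C W' W)) (homG W' Y).
Proof. by rewrite /homG -castH_comp_r; apply: castH_le; apply: chom_comp. Qed.

(* Since [1 ≤ C(Z,Z)], the weight lies below [C(F-,Z)], which may therefore replace it. *)
Lemma wcolim_hom {phi Z} : is_wcolim F phi Z ->
  forall W, chom C Z W = qinfI (fun X => lres (homF X W) (homF X Z)).
Proof.
case: phi => T [phv php] [p hp]; change (cext C Z = T) in p; subst T; rewrite /= in hp.
have phi_le : forall X, qle (phv X) (homF X Z).
  move=> X; move: (chom_id _ C Z); rewrite hp => /qinfI_spec/(_ X)/lres_spec.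
  by rewrite qcomp_id_l.
move=> W; apply: qle_antisym.
- by apply/qinfI_spec => X; apply/lres_spec; apply: homF_post.
- by rewrite hp; apply: qinfI_mono => X; apply: lres_anti; apply: phi_le.
Qed.

Lemma dense_hom Z W : chom C Z W = qinfI (fun X => lres (homF X W) (homF X Z)).
Proof.
case: (F_dense Z) => phi [Z' [colimZ' isoZ]]; have [q _] := isoZ.
have [homZ homZ'] := @qiso_hom _ _ _ _ q isoZ.
rewrite (homZ W) (wcolim_hom colimZ' W) castH_qinfI; apply: qinfI_ext => X.
rewrite (castH_lres eq_refl (eq_sym q) eq_refl); congr lres.
by rewrite /homF (homZ' (fobj F X)) castH_comm.
Qed.

Lemma wlim_hom {psi Z} : is_wlim G psi Z ->
  forall W, chom C W Z = qinfI (fun Y => rres (homG Z Y) (homG W Y)).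
Proof.
case: psi => T [psv psp] [p hp]; change (cext C Z = T) in p; subst T; rewrite /= in hp.
have psi_le : forall Y, qle (psv Y) (homG Z Y).
  move=> Y; move: (chom_id _ C Z); rewrite hp => /qinfI_spec/(_ Y)/rres_spec.
  by rewrite qcomp_id_r.
move=> W; apply: qle_antisym.
- by apply/qinfI_spec => Y; apply/rres_spec; apply: homG_pre.
- by rewrite hp; apply: qinfI_mono => Y; apply: rres_anti; apply: psi_le.
Qed.

Lemma codense_hom W Z : chom C W Z = qinfI (fun Y => rres (homG Z Y) (homG W Y)).
Proof.
case: (G_codense Z) => psi [Z' [limZ' isoZ]]; have [q _] := isoZ.
have [homZ homZ'] := @qiso_hom _ _ _ _ q isoZ.
rewrite (homZ' W) (wlim_hom limZ' W) castH_qinfI; apply: qinfI_ext => Y.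
rewrite (castH_rres eq_refl (eq_sym q) eq_refl); congr rres.
by rewrite /homG (homZ (fobj G Y)) castH_comm.
Qed.

Lemma dist_up_homF Z Y : dist_up Phi (fun X => homF X Z) Y = homG Z Y.
Proof.
rewrite /dist_up /homG (dense_hom Z (fobj G Y)) castH_qinfI; apply: qinfI_ext => X.
by rewrite (dmap_homF X Y) (castH_lres eq_refl eq_refl (fext G Y)).
Qed.

Lemma homF_closed Z : dist_closed Phi (fun X => homF X Z).
Proof.
move=> X; rewrite /dist_down {2}/homF (codense_hom (fobj F X) Z) castH_qinfI.
apply: qinfI_ext => Y.
by rewrite dist_up_homF (dmap_homG X Y) (castH_rres (fext F X) eq_refl eq_refl).
Qed.

Lemma homF_presheaf Z : is_presheaf E (fun X => homF X Z).
Proof. by move=> X X'; apply: homF_pre. Qed.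

Definition homFP Z : PObj E := existT _ (cext C Z) (exist _ (fun X => homF X Z) (homF_presheaf Z)).
Definition homFI Z : cobj (Isbell Phi) := exist _ (homFP Z) (homF_closed Z).

Lemma homFI_hom Z W : chom (Isbell Phi) (homFI Z) (homFI W) = chom C Z W.
Proof. by rewrite dense_hom. Qed.

Definition homF_functor : QFun C (Isbell Phi).
Proof.
refine (@Build_QFun Q C (Isbell Phi) homFI (fun Z => eq_refl) _).
move=> Z W; change (qle (chom C Z W) (chom (Isbell Phi) (homFI Z) (homFI W))).
by rewrite homFI_hom; apply: qle_refl.
Defined.

Section EssentialSurjectivity.
Variables (L : QFun (PCat C) C) (phi : cobj (Isbell Phi)).
Hypothesis L_adjoint : qadjoint L (Yoneda C).

Local Notation T := (pext (proj1_sig phi)).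
Local Notation phiv := (pval (proj1_sig phi)).

(* The preimage of [phi] is the colimit [L kappa]. *)
Definition kappa W : qhom Q (cext C W) T :=
  qinfI (fun Y => rres (dist_up Phi phiv Y) (homG W Y)).

Lemma dist_up_kappa W Y : qle (qcomp (dist_up Phi phiv Y) (kappa W)) (homG W Y).
Proof. by apply/rres_spec; apply: qinfI_lb. Qed.

Lemma kappa_presheaf : is_presheaf C kappa.
Proof.
move=> W W'; apply/qinfI_spec => Y; apply/rres_spec; rewrite qcomp_assoc.
by apply: qle_trans (comp_mono_r _ (dist_up_kappa W Y)) _; apply: homG_pre.
Qed.

Definition kappaP : PObj C := existT _ T (exist _ kappa kappa_presheaf).

Local Notation Z := (fobj L kappaP).
Local Notation eZ := (fext L kappaP : cext C Z = T).

Lemma dist_up_le_hom_L Y :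
  qle (dist_up Phi phiv Y) (castH eZ (fext G Y) (chom C Z (fobj G Y))).
Proof.
rewrite castH_split (L_adjoint kappaP) castH_qinfI.
apply/qinfI_spec => W; rewrite (castH_lres eq_refl eq_refl (fext G Y)).
by apply/lres_spec; apply: dist_up_kappa.
Qed.

Lemma hom_L_kappa W : castH eq_refl eZ (chom C W Z) = kappa W.
Proof.
apply: qle_antisym.
- apply/qinfI_spec => Y; apply/rres_spec.
  apply: qle_trans (comp_mono_r _ (dist_up_le_hom_L Y)) _.
  by rewrite -(castH_comp eq_refl eZ (fext G Y)); apply: castH_le; apply: chom_comp.
- have := chom_id _ C Z => /(castH_le eZ eZ).
  rewrite castH_id castH_split (L_adjoint kappaP) castH_qinfI.
  move=> /qinfI_spec/(_ W); rewrite (castH_lres eq_refl eq_refl eZ) => /lres_spec.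
  by rewrite qcomp_id_l.
Qed.

Lemma homF_L_kappa X : castH eq_refl eZ (homF X Z) = phiv X.
Proof.
rewrite -[phiv X](proj2_sig phi X) /homF (castH_trans _ _ _ _ (fext F X) eZ).
rewrite -(castH_trans eq_refl eZ (fext F X) eq_refl) hom_L_kappa castH_qinfI.
apply: qinfI_ext => Y.
by rewrite (dmap_homG X Y) (castH_rres (fext F X) eq_refl eq_refl).
Qed.

Lemma homFI_L_kappa_iso : qiso (Isbell Phi) (homFI Z) phi.
Proof.
exists eZ; split; apply/qinfI_spec => X; apply/lres_spec.
- rewrite comp_castH_id_l; change (qle (castH eq_refl eZ (homF X Z)) (phiv X)).
  by rewrite homF_L_kappa; apply: qle_refl.
- rewrite comp_castH_id_l' -(homF_L_kappa X) castH_trans castH_refl.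
  exact: qle_refl.
Qed.

End EssentialSurjectivity.

Lemma homF_functor_ess_surjective : total C -> ess_surjective homF_functor.
Proof. by case=> L L_adjoint phi; exists (fobj L (kappaP phi)); apply: homFI_L_kappa_iso. Qed.

Lemma homF_functor_equivalence : total C -> qequivalence homF_functor.
Proof. by move=> totC; split; [apply: homFI_hom | apply: homF_functor_ess_surjective]. Qed.

End Sufficiency.

Section Necessity.
Context {Q : Quantaloid} {E D : QCat Q} {Phi : QDist E D} {C : QCat Q}
  {H : QFun C (Isbell Phi)}.
Hypotheses (H_ff : fully_faithful H) (H_ess : ess_surjective H).

Local Notation HP Z := (proj1_sig (fobj H Z)).

Lemma HP_closed Z : dist_closed Phi (pval (HP Z)).
Proof. exact: proj2_sig (fobj H Z). Qed.

Lemma hom_of_qiso {Z Z'} {P P' : cobj (Isbell Phi)}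
    (isoP : qiso (Isbell Phi) (fobj H Z) P) (isoP' : qiso (Isbell Phi) (fobj H Z') P')
    (e : cext C Z = pext (proj1_sig P)) (e' : cext C Z' = pext (proj1_sig P')) :
  chom C Z Z' = castH (eq_sym e) (eq_sym e') (phom (proj1_sig P) (proj1_sig P')).
Proof.
rewrite -H_ff.
have [homP _] := @qiso_hom _ _ _ _ (eq_trans (fext H Z) e) isoP.
have [_ homP'] := @qiso_hom _ _ _ _ (eq_trans (fext H Z') e') isoP'.
by rewrite homP homP' !(castH_trans _ _ _ _ (eq_sym e) (eq_sym e')).
Qed.

Lemma hom_of_qiso_l {Z} W {P : cobj (Isbell Phi)} (isoP : qiso (Isbell Phi) (fobj H Z) P)
    (e : cext C Z = pext (proj1_sig P)) :
  chom C Z W = castH (eq_sym e) (fext H W) (phom (proj1_sig P) (HP W)).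
Proof.
rewrite (hom_of_qiso isoP (qiso_refl (fobj H W)) e (eq_sym (fext H W))).
exact: castH_irr.
Qed.

Lemma hom_of_qiso_r W {Z} {P : cobj (Isbell Phi)} (isoP : qiso (Isbell Phi) (fobj H Z) P)
    (e : cext C Z = pext (proj1_sig P)) :
  chom C W Z = castH (fext H W) (eq_sym e) (phom (HP W) (proj1_sig P)).
Proof.
rewrite (hom_of_qiso (qiso_refl (fobj H W)) isoP (eq_sym (fext H W)) e).
exact: castH_irr.
Qed.

Definition preimage (P : cobj (Isbell Phi)) : cobj C :=
  proj1_sig (constructive_indefinite_description _ (H_ess P)).

Lemma preimage_qiso P : qiso (Isbell Phi) (fobj H (preimage P)) P.
Proof. exact: proj2_sig (constructive_indefinite_description _ (H_ess P)). Qed.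

Lemma preimage_ext P : cext C (preimage P) = pext (proj1_sig P).
Proof. by case: (preimage_qiso P) => p _; apply: eq_trans (eq_sym (fext H _)) p. Qed.

Definition compHv (ps : PObj C) (X : cobj E) : qhom Q (cext E X) (pext ps) :=
  qsup (fun h => exists W,
    h = qcomp (pval ps W) (castH eq_refl (fext H W) (pval (HP W) X))).

Lemma compH_presheaf ps : is_presheaf E (compHv ps).
Proof.
move=> X X'; rewrite /compHv qcomp_sup_r; apply: qsup_least => h [g [[W ->] ->]].
rewrite -qcomp_assoc -castH_comp_r.
apply: qle_trans (comp_mono_l _ (castH_le eq_refl (fext H W) _ _
  (proj2_sig (projT2 (HP W)) X X'))) _.
by apply: qsup_ub; exists W.
Qed.

Definition compHP ps : PObj E := existT _ (pext ps) (exist _ (compHv ps) (compH_presheaf ps)).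

Lemma phom_compHP ps (r : PObj E) b (q : pext r = b) :
  castH eq_refl q (phom (compHP ps) r)
  = qinfI (fun W => lres (castH (fext H W) q (phom (HP W) r)) (pval ps W)).
Proof.
case: b / q; apply: eq_of_lower_bounds => z; split=> z_le.
- apply/qinfI_spec => W; apply/lres_spec.
  rewrite /phom castH_qinfI; apply/qinfI_spec => X.
  rewrite (castH_lres eq_refl (fext H W) eq_refl); apply/lres_spec.
  move: z_le => /qinfI_spec/(_ X)/lres_spec z_le.
  rewrite -qcomp_assoc.
  by apply: qle_trans (comp_mono_l z (qsup_ub (ex_intro _ W eq_refl))) z_le.
- apply/qinfI_spec => X; apply/lres_spec.
  rewrite /= /compHv qcomp_sup_l; apply: qsup_least => h [f [[W ->] ->]].
  rewrite qcomp_assoc.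
  move: z_le => /qinfI_spec/(_ W)/lres_spec z_le.
  apply: qle_trans (comp_mono_r _ z_le) _.
  by rewrite -(castH_comp eq_refl (fext H W) eq_refl); apply: phom_pval.
Qed.

Definition colim ps : cobj C := preimage (closureI Phi (compHP ps)).

Lemma colim_ext ps : cext C (colim ps) = pext ps.
Proof. exact: preimage_ext. Qed.

Lemma hom_colim ps W : castH (colim_ext ps) eq_refl (chom C (colim ps) W)
  = qinfI (fun W' => lres (chom C W' W) (pval ps W')).
Proof.
rewrite (hom_of_qiso_l W (preimage_qiso _) (colim_ext ps)).
rewrite (phom_closureP Phi (HP_closed W)).
rewrite (castH_trans _ _ _ _ eq_refl (fext H W)) phom_compHP.
by apply: qinfI_ext => W'; rewrite H_ff.
Qed.

Lemma le_hom_colim ps W :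
  qle (pval ps W) (castH eq_refl (colim_ext ps) (chom C W (colim ps))).
Proof.
have := chom_id _ C (colim ps) => /(castH_le (colim_ext ps) (colim_ext ps)).
rewrite castH_id castH_split hom_colim castH_qinfI => /qinfI_spec/(_ W).
rewrite (castH_lres eq_refl eq_refl (colim_ext ps)) => /lres_spec.
by rewrite qcomp_id_l.
Qed.

Definition colim_functor : QFun (PCat C) C.
Proof.
refine (@Build_QFun Q (PCat C) C colim colim_ext _) => ps ps'.
rewrite castH_split hom_colim castH_qinfI; apply/qinfI_spec => W.
rewrite (castH_lres eq_refl eq_refl (colim_ext ps')); apply/lres_spec.
exact: qle_trans (phom_pval _ _ _) (le_hom_colim ps' W).
Defined.

Lemma total_of_equivalence : total C.
Proof. by exists colim_functor => ps W; apply: hom_colim. Qed.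

Definition Fobj X : cobj C := preimage (closureI Phi (yon_obj E X)).

Lemma Fobj_ext X : cext C (Fobj X) = cext E X.
Proof. exact: preimage_ext. Qed.

Lemma hom_Fobj X W : castH (Fobj_ext X) eq_refl (chom C (Fobj X) W)
  = castH eq_refl (fext H W) (pval (HP W) X).
Proof.
rewrite (hom_of_qiso_l W (preimage_qiso _) (Fobj_ext X)).
rewrite (phom_closureP Phi (HP_closed W)) phom_yoneda.
exact: castH_trans.
Qed.

Definition Ffun : QFun E C.
Proof.
refine (@Build_QFun Q E C Fobj Fobj_ext _) => X X'.
rewrite (hom_of_qiso (preimage_qiso _) (preimage_qiso _) (Fobj_ext X) (Fobj_ext X')).
rewrite (castH_trans _ _ _ _ eq_refl eq_refl) castH_refl.
rewrite (phom_closureP Phi (closureP_closed Phi (yon_obj E X'))) phom_yoneda.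
exact: le_dist_down_up.
Defined.

Definition Gobj Y : cobj C := preimage (dmapI Phi Y).

Lemma Gobj_ext Y : cext C (Gobj Y) = cext D Y.
Proof. exact: preimage_ext. Qed.

Lemma hom_Gobj W Y : castH eq_refl (Gobj_ext Y) (chom C W (Gobj Y))
  = castH (fext H W) eq_refl (phom (HP W) (dmapP Phi Y)).
Proof.
rewrite (hom_of_qiso_r W (preimage_qiso _) (Gobj_ext Y)).
exact: castH_trans.
Qed.

Definition Gfun : QFun D C.
Proof.
refine (@Build_QFun Q D C Gobj Gobj_ext _) => Y Y'.
rewrite (hom_of_qiso (preimage_qiso _) (preimage_qiso _) (Gobj_ext Y) (Gobj_ext Y')).
rewrite (castH_trans _ _ _ _ eq_refl eq_refl) castH_refl.
by apply/qinfI_spec => X; apply/lres_spec; apply: dmap_post.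
Defined.

Lemma Ffun_Gfun_dmap X Y :
  castH (fext Ffun X) (fext Gfun Y) (chom C (fobj Ffun X) (fobj Gfun Y)) = dmap Phi X Y.
Proof.
rewrite /= (hom_of_qiso (preimage_qiso _) (preimage_qiso _) (Fobj_ext X) (Gobj_ext Y)).
rewrite (castH_trans _ _ _ _ eq_refl eq_refl) castH_refl.
by rewrite (phom_closureP Phi (dmapP_closed Phi Y)) phom_yoneda.
Qed.

Lemma Ffun_dense : dense Ffun.
Proof.
move=> Z; exists (HP Z), Z; split; last exact: qiso_refl.
exists (eq_sym (fext H Z)) => W.
rewrite -(H_ff Z W) (castH_trans _ _ _ _ eq_refl (fext H W)) castH_qinfI.
apply: qinfI_ext => X.
by rewrite (castH_lres eq_refl eq_refl (fext H W)) -hom_Fobj.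
Qed.

(* The exchange of residuals turns the hom-formula of the limit into the
   closedness of [H Z]. *)
Lemma Gfun_codense : codense Gfun.
Proof.
move=> Z.
exists (existT _ (pext (HP Z))
  (exist _ (dist_up Phi (pval (HP Z))) (dist_up_copresheaf Phi _))), Z.
split; last exact: qiso_refl.
exists (eq_sym (fext H Z)) => W.
rewrite -(H_ff W Z) (castH_trans _ _ _ _ (fext H W) eq_refl).
transitivity (castH (fext H W) eq_refl
  (qinfI (fun Y => rres (dist_up Phi (pval (HP Z)) Y) (phom (HP W) (dmapP Phi Y))))).
  congr castH; rewrite /phom -lres_dist_down_rres_dist_up.
  by apply: qinfI_ext => X; rewrite HP_closed.
rewrite castH_qinfI; apply: qinfI_ext => Y.
by rewrite hom_Gobj (castH_rres (fext H W) eq_refl eq_refl).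
Qed.

End Necessity.

Theorem theorem9p1 (Q : Quantaloid) (E D : QCat Q) (Phi : QDist E D) (C : QCat Q) :
  (exists H : QFun C (Isbell Phi), qequivalence H)
  <->
  (total C /\
   exists (F : QFun E C) (G : QFun D C),
     (forall (X : cobj E) (Y : cobj D),
        castH (fext F X) (fext G Y) (chom C (fobj F X) (fobj G Y)) = dmap Phi X Y)
     /\ dense F /\ codense G).
Proof.
split.
- case=> H [H_ff H_ess]; split; first exact: total_of_equivalence H_ff H_ess.
  exists (Ffun H_ff H_ess), (Gfun H_ff H_ess).
  split; first exact: Ffun_Gfun_dmap.
  by split; [apply: Ffun_dense | apply: Gfun_codense].
- case=> totC [F [G [F_G_dmap [F_dense G_codense]]]].
  by exists (homF_functor _ _ _ F_G_dmap F_dense G_codense); apply: homF_functor_equivalence.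
Qed.
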